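(* For any natural number $n \geq 1$, $\{\omega \cdot (n+1), \omega^\star \cdot (n+1)\} \leq_c \{\omega^2 \cdot n, (\omega^2)^\star \cdot n\}$.
   Context: Structures have domains contained in $\omega$. For countable structures $\mathcal{A},\mathcal{B}$, the class $\{\mathcal{A},\mathcal{B}\}$ denotes the class of all structures (with domain $\subseteq\omega$) isomorphic to $\mathcal{A}$ or to $\mathcal{B}$. Linear orders are in the language $\{<\}$; $L^\star$ is the reverse of a linear order $L$; $\omega\cdot (n+1)$, $\omega^2\cdot n$ are ordinal order types. An enumeration operator $\Gamma$ is a c.e. set of pairs $(\alpha,\varphi)$ with $\alpha$ a finite set of basic (atomic or negated atomic) sentences of the input language with constants from $\omega$ and $\varphi$ a basic sentence of the output language with constants from $\omega$; $\Gamma(X)=\{\varphi : (\alpha,\varphi)\in\Gamma,\ \alpha\subseteq X\}$. $\Gamma$ is a computable embedding of $\mathcal{K}_0$ into $\mathcal{K}_1$ ($\mathcal{K}_0\leq_c\mathcal{K}_1$) if for every $\mathcal{A}\in\mathcal{K}_0$, $\Gamma$ applied to the atomic diagram of $\mathcal{A}$ is the atomic diagram of a structure $\Gamma(\mathcal{A})\in\mathcal{K}_1$, and for all $\mathcal{A},\mathcal{B}\in\mathcal{K}_0$, $\mathcal{A}\cong\mathcal{B}$ iff $\Gamma(\mathcal{A})\cong\Gamma(\mathcal{B})$. *)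

From HB Require Import structures.
From mathcomp Require Import all_boot.
Set Implicit Arguments. Unset Strict Implicit. Unset Printing Implicit Defensive.

Definition cpair (a b : nat) : nat := (a + b) * (a + b).+1 %/ 2 + b.
Definition unpair_step (p : nat * nat) : nat * nat :=
  if p.1 is a.+1 then (a, p.2.+1) else (p.2.+1, 0).
Definition unpair (n : nat) : nat * nat := iter n unpair_step (0, 0).

Inductive prcode : Type :=
| PZero
| PSucc
| PId
| PFst
| PSnd
| PPair of prcode & prcode
| PComp of prcode & prcode
| PRec of prcode & prcode     (* h<x,0> = f x ; h<x,k+1> = g <x,<k,h<x,k>>> *)
| PMu of prcode.              (* x |-> least y with f<x,y> = 0, all earlier defined *)

Inductive peval : prcode -> nat -> nat -> Prop :=
| ev_zero x : peval PZero x 0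
| ev_succ x : peval PSucc x x.+1
| ev_id x : peval PId x x
| ev_fst x : peval PFst x (unpair x).1
| ev_snd x : peval PSnd x (unpair x).2
| ev_pair f g x a b : peval f x a -> peval g x b -> peval (PPair f g) x (cpair a b)
| ev_comp f g x y z : peval g x y -> peval f y z -> peval (PComp f g) x z
| ev_rec0 f g x y : peval f x y -> peval (PRec f g) (cpair x 0) y
| ev_recS f g x k y z : peval (PRec f g) (cpair x k) y ->
    peval g (cpair x (cpair k y)) z -> peval (PRec f g) (cpair x k.+1) z
| ev_mu f x y :
    peval f (cpair x y) 0 ->
    (forall z, z < y -> exists v, v <> 0 /\ peval f (cpair x z) v) ->
    peval (PMu f) x y.

Definition ce_set (S : nat -> Prop) : Prop :=
  exists c : prcode, forall x, S x <-> exists y, peval c x y.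

Definition ce_pred (T : countType) (P : T -> Prop) : Prop :=
  ce_set (fun n => exists x : T, pickle x = n /\ P x).

Record lstruct := LStruct { sdom : nat -> Prop ; slt : nat -> nat -> Prop }.

Inductive atom := AEq of nat & nat | ALt of nat & nat.
Inductive bsent := BPos of atom | BNeg of atom.

Definition bsent_enc (s : bsent) : bool * (bool * (nat * nat)) :=
  match s with
  | BPos (AEq a b) => (true, (true, (a, b)))
  | BPos (ALt a b) => (true, (false, (a, b)))
  | BNeg (AEq a b) => (false, (true, (a, b)))
  | BNeg (ALt a b) => (false, (false, (a, b)))
  end.
Definition bsent_dec (p : bool * (bool * (nat * nat))) : bsent :=
  match p with
  | (true, (true, (a, b))) => BPos (AEq a b)
  | (true, (false, (a, b))) => BPos (ALt a b)
  | (false, (true, (a, b))) => BNeg (AEq a b)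
  | (false, (false, (a, b))) => BNeg (ALt a b)
  end.
Lemma bsent_encK : cancel bsent_enc bsent_dec.
Proof. by case=> [[]|[]]. Qed.
HB.instance Definition _ := Countable.copy bsent (can_type bsent_encK).

Definition atom_consts (a : atom) : nat * nat :=
  match a with AEq x y => (x, y) | ALt x y => (x, y) end.
Definition atom_holds (A : lstruct) (a : atom) : Prop :=
  match a with AEq x y => x = y | ALt x y => slt A x y end.

Definition diag (A : lstruct) (s : bsent) : Prop :=
  match s with
  | BPos a => [/\ sdom A (atom_consts a).1, sdom A (atom_consts a).2 & atom_holds A a]
  | BNeg a => [/\ sdom A (atom_consts a).1, sdom A (atom_consts a).2 & ~ atom_holds A a]
  end.

Definition enum_op := seq bsent * bsent -> Prop.
Definition is_enum_op (G : enum_op) : Prop := ce_pred G.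
Definition apply_op (G : enum_op) (X : bsent -> Prop) (phi : bsent) : Prop :=
  exists alpha : seq bsent, G (alpha, phi) /\ (forall s, s \in alpha -> X s).

Definition iso (A B : lstruct) : Prop :=
  exists f : nat -> nat,
    [/\ forall x, sdom A x -> sdom B (f x),
        forall x y, sdom A x -> sdom A y -> f x = f y -> x = y,
        forall y, sdom B y -> exists2 x, sdom A x & f x = y
      & forall x y, sdom A x -> sdom A y -> (slt A x y <-> slt B (f x) (f y))].

Definition iso_to (A : lstruct) (T : Type) (R : T -> T -> Prop) : Prop :=
  exists f : nat -> T,
    [/\ forall x y, sdom A x -> sdom A y -> f x = f y -> x = y,
        forall t : T, exists2 x, sdom A x & f x = t
      & forall x y, sdom A x -> sdom A y -> (slt A x y <-> R (f x) (f y))].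

Record order_type := OrderType { ot_car : Type ; ot_lt : ot_car -> ot_car -> Prop }.

Definition cls2 (L1 L2 : order_type) (A : lstruct) : Prop :=
  iso_to A (@ot_lt L1) \/ iso_to A (@ot_lt L2).

(* Computable embedding K0 <=_c K1. Gamma(A) is the structure whose atomic
   diagram is Gamma applied to the atomic diagram of A. *)
Definition comp_embeds (K0 K1 : lstruct -> Prop) : Prop :=
  exists G : enum_op,
    [/\ is_enum_op G,
        forall A, K0 A -> exists B, K1 B /\ (forall phi, apply_op G (diag A) phi <-> diag B phi)
      & forall A A' B B', K0 A -> K0 A' ->
          (forall phi, apply_op G (diag A) phi <-> diag B phi) ->
          (forall phi, apply_op G (diag A') phi <-> diag B' phi) ->
          (iso A A' <-> iso B B')].

Definition lex (T U : Type) (RT : T -> T -> Prop) (RU : U -> U -> Prop)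
  (p q : T * U) : Prop := RT p.1 q.1 \/ (p.1 = q.1 /\ RU p.2 q.2).

Definition ord_lt (k : nat) (i j : 'I_k) : Prop := (i < j)%N.
Definition nat_lt (a b : nat) : Prop := (a < b)%N.

Definition omega2_lt : nat * nat -> nat * nat -> Prop := lex nat_lt nat_lt.

(* L * m  (m copies of L in sequence) realized on 'I_m * L. *)
Definition rev_ot (L : order_type) : order_type :=
  OrderType (fun x y : ot_car L => ot_lt y x).

Definition omega_times (m : nat) : order_type :=
  OrderType (lex (@ord_lt m) nat_lt).
Definition omegastar_times (m : nat) : order_type :=
  OrderType (lex (@ord_lt m) (fun a b : nat => nat_lt b a)).
Definition omega2_times (m : nat) : order_type :=
  OrderType (lex (@ord_lt m) omega2_lt).
Definition omega2star_times (m : nat) : order_type :=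
  OrderType (lex (@ord_lt m) (fun p q : nat * nat => omega2_lt q p)).

(* The operator sends a linear order A to the order B(A) on the pairs <x, y> with y <_A x
   for which some w >_A x exceeds y as a natural number, ordered lexicographically by (x, y)
   in A.  Every atomic or negated atomic fact of B(A) follows from finitely many facts of A by
   one of seven rules, so this is an enumeration operator.
   If A has type ω·(n+2), every pair qualifies and the element x at position k of copy q >= 1
   contributes the segment ω·q + k, so B(A) has type ω + ω²·(n+1) = ω²·(n+1).
   If A has type ω*·(n+2), copies 0, ..., n of ω* each contribute (ω²)*, while in the last
   copy only finitely many y have a witness above x, so it contributes only ω* and B(A) has
   type (ω²)*·(n+1).  Finally ω·(n+2) and ω²·(n+1) have a least element and their reverses do
   not, so B preserves and reflects isomorphism on the class. *)

From mathcomp Require Import all_boot.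
From Stdlib Require Import Lia ClassicalEpsilon Classical.
From mathcomp Require Import zify.
Set Implicit Arguments. Unset Strict Implicit. Unset Printing Implicit Defensive.

(** * Cantor pairing *)

Definition tri s := s * s.+1 %/ 2.

Lemma triS s : tri s.+1 = tri s + s.+1.
Proof.
rewrite /tri; have -> : s.+1 * s.+2 = s.+1 * 2 + s * s.+1 by nia.
by rewrite divnMDl // addnC.
Qed.

Lemma tri_addn_lt s t : s < t -> tri s + s < tri t.
Proof.
elim: t => // t IH; rewrite ltnS leq_eqVlt => /orP[/eqP-> | /IH]; rewrite triS; lia.
Qed.

Lemma tri_leq s t : s <= t -> tri s <= tri t.
Proof. by rewrite leq_eqVlt => /orP[/eqP-> // | /tri_addn_lt]; lia. Qed.

Lemma cpairE a b : cpair a b = tri (a + b) + b.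
Proof. by []. Qed.

Lemma cpair_inj a b c d : cpair a b = cpair c d -> a = c /\ b = d.
Proof.
rewrite !cpairE => E; suff Hs : a + b = c + d by rewrite Hs in E; lia.
by case: (ltngtP (a + b) (c + d)) => // /tri_addn_lt; lia.
Qed.

Lemma cpair_unpair_step p :
  cpair (unpair_step p).1 (unpair_step p).2 = (cpair p.1 p.2).+1.
Proof.
case: p => [[|a] b] /=; rewrite !cpairE; first by rewrite !addn0 add0n triS; lia.
by rewrite addSnnS; lia.
Qed.

Lemma cpair_unpair n : cpair (unpair n).1 (unpair n).2 = n.
Proof. by elim: n => // n IH; rewrite /unpair iterS cpair_unpair_step IH. Qed.

Lemma unpair_cpair a b : unpair (cpair a b) = (a, b).
Proof.
by have := cpair_unpair (cpair a b); case: (unpair _) => x y /= /cpair_inj[-> ->].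
Qed.

Lemma cpair_geL a b : a <= cpair a b.
Proof. by case: a => // a; have := tri_addn_lt (ltnSn (a + b)); rewrite cpairE addSn; lia. Qed.

Lemma cpair_geR a b : b <= cpair a b.
Proof. by rewrite cpairE; lia. Qed.

Lemma leq_cpair a b c d : a <= c -> b <= d -> cpair a b <= cpair c d.
Proof. by move=> ac bd; have := @tri_leq (a + b) (c + d); rewrite !cpairE; lia. Qed.

(** * Total computable functions *)

Lemma peval_compP f g x z :
  peval (PComp f g) x z -> exists2 y, peval g x y & peval f y z.
Proof. by move=> H; inversion H; exists y. Qed.

Lemma peval_pairP f g x z :
  peval (PPair f g) x z -> exists a b, [/\ peval f x a, peval g x b & z = cpair a b].
Proof. by move=> H; inversion H; exists a, b. Qed.

Lemma peval_recP f g x k y : peval (PRec f g) (cpair x k) y ->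
  if k is k'.+1 then
    exists2 y', peval (PRec f g) (cpair x k') y' & peval g (cpair x (cpair k' y')) y
  else peval f x y.
Proof.
move=> H; remember (PRec f g) as e eqn:Ee; remember (cpair x k) as z eqn:Ez.
case: H Ee Ez => // [f' g' x' y' Hf | f' g' x' k' y' z' Hr Hg] [Ef Eg] /cpair_inj[Ex Ek];
  subst; [done | by exists y'].
Qed.

Definition computable (f : nat -> nat) := exists c, forall x y, peval c x y <-> y = f x.

Lemma computable_ext f g : f =1 g -> computable f -> computable g.
Proof. by move=> E [c Hc]; exists c => x y; rewrite -E. Qed.

Lemma computable_id : computable id.
Proof. by exists PId => x y; split => [H|->]; [inversion H | constructor]. Qed.

Lemma computable0 : computable (fun _ => 0).
Proof. by exists PZero => x y; split => [H|->]; [inversion H | constructor]. Qed.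

Lemma computable_comp f g : computable f -> computable g -> computable (f \o g).
Proof.
move=> [c Hc] [d Hd]; exists (PComp c d) => x y; split => [H|->].
  by case/peval_compP: H => y' /Hd -> /Hc.
by apply: (@ev_comp _ _ _ (g x)); [apply/Hd | apply/Hc].
Qed.

Lemma computableS f : computable f -> computable (fun x => (f x).+1).
Proof.
apply: (computable_comp (f := succn)).
by exists PSucc => x y; split => [H|->]; [inversion H | constructor].
Qed.

Lemma computable_const k : computable (fun _ => k).
Proof. by elim: k => [|k]; [exact: computable0 | exact: computableS]. Qed.

Lemma computable_fst f : computable f -> computable (fun x => (unpair (f x)).1).
Proof.
apply: (computable_comp (f := (fun p => (unpair p).1))).
by exists PFst => x y; split => [H|->]; [inversion H | constructor].
Qed.

Lemma computable_snd f : computable f -> computable (fun x => (unpair (f x)).2).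
Proof.
apply: (computable_comp (f := (fun p => (unpair p).2))).
by exists PSnd => x y; split => [H|->]; [inversion H | constructor].
Qed.

Lemma computable_cpair f g :
  computable f -> computable g -> computable (fun x => cpair (f x) (g x)).
Proof.
move=> [c Hc] [d Hd]; exists (PPair c d) => x y; split => [H|->].
  by case/peval_pairP: H => a [b [/Hc -> /Hd -> ->]].
by constructor; [apply/Hc | apply/Hd].
Qed.

Section PrimitiveRecursion.
Variables (f g : nat -> nat).

Fixpoint prim_rec x k := if k is k'.+1 then g (cpair x (cpair k' (prim_rec x k'))) else f x.

Lemma computable_prim_rec :
  computable f -> computable g -> computable (fun p => prim_rec (unpair p).1 (unpair p).2).
Proof.
move=> [c Hc] [d Hd]; exists (PRec c d) => p y; rewrite -{1}(cpair_unpair p).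
elim: (unpair p).2 y => [|k IH] y /=; split => [H|->].
- by move/peval_recP: H => /Hc.
- by constructor; apply/Hc.
- by case/peval_recP: H => y' /IH -> /Hd.
- by apply: ev_recS; [apply/IH | apply/Hd].
Qed.
End PrimitiveRecursion.

Definition computable2 (h : nat -> nat -> nat) := computable (fun p => h (unpair p).1 (unpair p).2).

Lemma computable_apply2 h f g :
  computable2 h -> computable f -> computable g -> computable (fun x => h (f x) (g x)).
Proof.
move=> Hh Hf Hg; apply: computable_ext (computable_comp Hh (computable_cpair Hf Hg)) => x /=.
by rewrite unpair_cpair.
Qed.

Lemma computable2_prim_rec f g (h : nat -> nat -> nat) :
  computable f -> computable g -> (forall x, h x 0 = f x) ->
  (forall x k, h x k.+1 = g (cpair x (cpair k (h x k)))) -> computable2 h.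
Proof.
move=> Hf Hg h0 hS; apply: computable_ext (computable_prim_rec Hf Hg) => p /=.
by elim: (unpair p).2 => [|k /= ->]; rewrite ?h0 ?hS.
Qed.

Lemma computable_of2 (h : nat -> nat -> nat) f :
  computable2 h -> computable f -> computable (fun x => h 0 (f x)).
Proof. by move=> Hh; apply: computable_apply2 Hh (computable_const 0). Qed.

Lemma computable_rec_x : computable (fun v => (unpair v).1).
Proof. exact/computable_fst/computable_id. Qed.

Lemma computable_rec_k : computable (fun v => (unpair (unpair v).2).1).
Proof. exact/computable_fst/computable_snd/computable_id. Qed.

Lemma computable_rec_y : computable (fun v => (unpair (unpair v).2).2).
Proof. exact/computable_snd/computable_snd/computable_id. Qed.

Lemma computable_add f g : computable f -> computable g -> computable (fun x => f x + g x).
Proof.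
apply: computable_apply2.
apply: (computable2_prim_rec computable_id (computableS computable_rec_y)).
  exact: addn0.
by move=> x k; rewrite !unpair_cpair addnS.
Qed.

Lemma computable_mul f g : computable f -> computable g -> computable (fun x => f x * g x).
Proof.
apply: computable_apply2.
apply: (computable2_prim_rec computable0 (computable_add computable_rec_y computable_rec_x)).
  exact: muln0.
by move=> x k; rewrite !unpair_cpair mulnS addnC.
Qed.

Lemma computable_pred f : computable f -> computable (fun x => (f x).-1).
Proof.
apply: (computable_of2 (h := fun _ k => k.-1)).
by apply: (computable2_prim_rec computable0 computable_rec_k) => // x k; rewrite !unpair_cpair.
Qed.

Lemma computable_sub f g : computable f -> computable g -> computable (fun x => f x - g x).
Proof.
apply: computable_apply2.
apply: (computable2_prim_rec computable_id (computable_pred computable_rec_y)).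
  exact: subn0.
by move=> x k; rewrite !unpair_cpair subnS.
Qed.

Lemma computable_exp2 f : computable f -> computable (fun x => 2 ^ f x).
Proof.
apply: (computable_of2 (h := fun _ k => 2 ^ k)).
have double := computable_add computable_rec_y computable_rec_y.
apply: (computable2_prim_rec (computable_const 1) double) => // x k.
by rewrite !unpair_cpair expnS mul2n addnn.
Qed.

(* Named so that [solve_computable] can match them: Ltac patterns cannot contain [if]. *)
Definition if_eqn (a b c d : nat) := if a == b then c else d.
Definition if_ltn (a b c d : nat) := if a < b then c else d.

Lemma computable_if0 z a b : computable z -> computable a -> computable b ->
  computable (fun x => if z x == 0 then a x else b x).
Proof.
move=> Hz Ha Hb; have Hz' := computable_sub (computable_const 1) Hz.
apply: computable_ext (computable_add (computable_mul Ha Hz')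
         (computable_mul Hb (computable_sub (computable_const 1) Hz'))) => x.
by case: (z x) => [|k]; rewrite /= ?subn0 ?subSS ?sub0n; lia.
Qed.

Lemma computable_if_eqn a b c d : computable a -> computable b -> computable c -> computable d ->
  computable (fun x => if_eqn (a x) (b x) (c x) (d x)).
Proof.
move=> Ha Hb Hc Hd; have Hdist := computable_add (computable_sub Ha Hb) (computable_sub Hb Ha).
apply: computable_ext (computable_if0 Hdist Hc Hd) => x.
by rewrite /if_eqn; case: eqVneq => E; case: eqVneq => //; lia.
Qed.

Lemma computable_if_ltn a b c d : computable a -> computable b -> computable c -> computable d ->
  computable (fun x => if_ltn (a x) (b x) (c x) (d x)).
Proof.
move=> Ha Hb Hc Hd.
apply: computable_ext (computable_if0 (computable_sub (computableS Ha) Hb) Hc Hd) => x.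
by rewrite subn_eq0.
Qed.

Definition unpair_nth (i t : nat) : nat := (unpair (iter i (fun u => (unpair u).2) t)).1.

Lemma unpair_nth0 a t : unpair_nth 0 (cpair a t) = a.
Proof. by rewrite /unpair_nth unpair_cpair. Qed.

Lemma unpair_nthS i a t : unpair_nth i.+1 (cpair a t) = unpair_nth i t.
Proof. by rewrite /unpair_nth iterSr unpair_cpair. Qed.

Lemma computable_unpair_nth i f : computable f -> computable (fun x => unpair_nth i (f x)).
Proof.
elim: i f => [|i IH] f Hf; first exact: computable_fst.
by apply: computable_ext (IH _ (computable_snd Hf)) => x; rewrite /unpair_nth iterSr.
Qed.

Lemma ce_set_zeros f : computable f -> ce_set (fun n => exists t, f (cpair n t) = 0).
Proof.
move=> [c Hc]; exists (PMu c) => n; split => [ex | [y H]]; last first.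
  by inversion H; exists y; symmetry; apply/Hc.
have ex' : exists t, f (cpair n t) == 0 by case: ex => t /eqP; exists t.
case: (ex_minnP ex') => t /eqP Ht tmin; exists t; constructor; first by apply/Hc.
move=> z lt; exists (f (cpair n z)); split; last exact/Hc.
by move=> /eqP/tmin; lia.
Qed.

Lemma computable_code_cons a s : computable a -> computable (fun x => CodeSeq.code (s x)) ->
  computable (fun x => CodeSeq.code (a x :: s x)).
Proof.
move=> Ha Hs; apply: computable_ext (computable_mul (computable_exp2 Ha)
                                       (computableS (computable_add Hs Hs))) => x.
by rewrite /= addnn.
Qed.

Ltac solve_computable :=
  lazymatch goal with
  | |- computable (fun _ => ?k) => exact: computable_const
  | |- computable (fun x => x) => exact: computable_id
  | |- computable (fun x => unpair_nth ?i (@?f x)) =>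
      apply: (computable_unpair_nth i (f := f)); solve_computable
  | |- computable (fun x => (unpair (@?f x)).1) =>
      apply: (computable_fst (f := f)); solve_computable
  | |- computable (fun x => (unpair (@?f x)).2) =>
      apply: (computable_snd (f := f)); solve_computable
  | |- computable (fun x => cpair (@?a x) (@?b x)) =>
      apply: (computable_cpair (f := a) (g := b)); solve_computable
  | |- computable (fun x => CodeSeq.code (@?a x :: @?s x)) =>
      apply: (computable_code_cons (a := a) (s := s)); solve_computable
  | |- computable (fun x => if_eqn (@?a x) (@?b x) (@?c x) (@?d x)) =>
      apply: (computable_if_eqn (a := a) (b := b) (c := c) (d := d)); solve_computable
  | |- computable (fun x => if_ltn (@?a x) (@?b x) (@?c x) (@?d x)) =>
      apply: (computable_if_ltn (a := a) (b := b) (c := c) (d := d)); solve_computable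
  | |- computable (fun x => @?a x + @?b x) =>
      apply: (computable_add (f := a) (g := b)); solve_computable
  end.

(** * Order types of strict total orders *)

Definition strict_total (S : nat -> Prop) (R : nat -> nat -> Prop) :=
  [/\ forall a, S a -> ~ R a a,
      forall a b c, S a -> S b -> S c -> R a b -> R b c -> R a c
    & forall a b, S a -> S b -> [\/ R a b, a = b | R b a]].

Lemma strict_total_sub S S' R : strict_total S R -> (forall a, S' a -> S a) -> strict_total S' R.
Proof.
move=> [irr trans tot] sub; split.
- by move=> a /sub; apply: irr.
- by move=> a b c /sub ? /sub ? /sub ?; apply: trans.
- by move=> a b /sub ? /sub ?; apply: tot.
Qed.

Lemma strict_total_rev S R : strict_total S R -> strict_total S (fun a b => R b a).
Proof.
move=> [irr trans tot]; split.
- by move=> a /irr.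
- by move=> a b c Sa Sb Sc h1 h2; apply: trans h2 h1.
- by move=> a b Sa Sb; case: (tot _ _ Sa Sb) => h; [constructor 3 | constructor 2 | constructor 1].
Qed.

Lemma strict_total_asym S R : strict_total S R -> forall a b, S a -> S b -> R a b -> ~ R b a.
Proof. by move=> [irr trans _] a b Sa Sb h1 h2; apply: irr Sa (trans _ _ _ Sa Sb Sa h1 h2). Qed.

Lemma iso_to_rev (T : Type) (Q : T -> T -> Prop) S R :
  iso_to (LStruct S (fun a b => R b a)) Q -> iso_to (LStruct S R) (fun s t => Q t s).
Proof. by move=> [h [h1 h2 h3]]; exists h; split => // a b Sa Sb; apply: h3. Qed.

Lemma iso_to_lex (I T : Type) (ltI : I -> I -> Prop) (Q : T -> T -> Prop)
    (S : nat -> Prop) (R : nat -> nat -> Prop) (block : nat -> I) :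
  (forall a b, S a -> S b -> R a b -> ~ R b a) ->
  (forall i j, ltI i j -> ~ ltI j i) ->
  (forall i j, i <> j -> ltI i j \/ ltI j i) ->
  (forall a b, S a -> S b -> ltI (block a) (block b) -> R a b) ->
  (forall i, iso_to (LStruct (fun a => S a /\ block a = i) R) Q) ->
  iso_to (LStruct S R) (lex ltI Q).
Proof.
move=> asymR asymI totI block_mono blockQ.
have [h hP] : exists h : I -> nat -> T, forall i, [/\
    forall a b, S a /\ block a = i -> S b /\ block b = i -> h i a = h i b -> a = b,
    forall t, exists2 a, S a /\ block a = i & h i a = t
  & forall a b, S a /\ block a = i -> S b /\ block b = i -> (R a b <-> Q (h i a) (h i b))].
  exists (fun i => proj1_sig (constructive_indefinite_description _ (blockQ i))) => i.
  exact: proj2_sig (constructive_indefinite_description _ (blockQ i)).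
exists (fun a => (block a, h (block a) a)); split => /=.
- move=> a b Sa Sb [E1 E2]; have [inj _ _] := hP (block a).
  by apply: inj => //; rewrite E1 in E2 *.
- case=> i t; have [_ sur _] := hP i; have [a [Sa <-] <-] := sur t.
  by exists a.
- move=> a b Sa Sb; rewrite /lex /=; case: (classic (block a = block b)) => E.
    have [_ _ ord] := hP (block a); have {}ord := ord a b (conj Sa erefl) (conj Sb (esym E)).
    rewrite -E ord; split => [q | [l | [_ //]]]; first by right.
    by case: (asymI _ _ l l).
  case: (totI _ _ E) => lt; first by split => _; [left | apply: block_mono].
  split => [/(asymR _ _ Sa Sb) [] | [l | [/E //]]]; first exact: block_mono.
  by case: (asymI _ _ lt l).
Qed.

Definition pbool (P : Prop) : bool := if excluded_middle_informative P then true else false.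

Lemma pboolP P : reflect P (pbool P).
Proof. by rewrite /pbool; case: excluded_middle_informative => h; constructor. Qed.

Lemma count_lt_subpred (T : eqType) (p q : pred T) s x :
  subpred p q -> x \in s -> q x -> ~~ p x -> count p s < count q s.
Proof.
move=> pq; elim: s => //= y s IH; rewrite inE => /orP[/eqP<- | xs] qx px.
  by rewrite qx (negbTE px) add0n add1n ltnS sub_count.
by have := IH xs qx px; case: (boolP (p y)) => [/pq -> | _]; case: (q y); lia.
Qed.

Section IsoToNat.
Variables (S : nat -> Prop) (R : nat -> nat -> Prop).
Hypothesis R_total : strict_total S R.
Hypothesis R_finite_below : forall a, S a -> exists N, forall b, S b -> R b a -> b < N.
Hypothesis S_unbounded : forall N, exists a, S a /\ N <= a.

Let below_bound a := epsilon (inhabits 0) (fun N => forall b, S b -> R b a -> b < N).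

Let below_boundP a : S a -> forall b, S b -> R b a -> b < below_bound a.
Proof. by move=> Sa; apply: (epsilon_spec (inhabits 0) _ (R_finite_below Sa)). Qed.

Let below a := fun b => pbool (S b /\ R b a).

Definition rank a := count (below a) (iota 0 (below_bound a)).

Lemma rankE a M : S a -> below_bound a <= M -> rank a = count (below a) (iota 0 M).
Proof.
move=> Sa le; rewrite -(subnKC le) iotaD count_cat /rank.
suff -> : count (below a) (iota (0 + below_bound a) (M - below_bound a)) = 0 by rewrite addn0.
apply/eqP; rewrite -leqn0 leqNgt -has_count; apply/hasPn => b.
rewrite mem_iota add0n => /andP[h _]; apply/pboolP => -[Sb /(below_boundP Sa Sb)]; lia.
Qed.

Lemma rank_lt a b : S a -> S b -> R a b -> rank a < rank b.
Proof.
move=> Sa Sb Rab; have [irr trans _] := R_total; pose M := maxn (below_bound a) (below_bound b).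
rewrite (@rankE a M) ?leq_maxl // (@rankE b M) ?leq_maxr //.
apply: (@count_lt_subpred _ _ _ _ a).
- by move=> c /pboolP[Sc Rc]; apply/pboolP; split => //; apply: trans Rc Rab.
- by rewrite mem_iota add0n; have := below_boundP Sb Sa Rab; lia.
- exact/pboolP.
- by apply/pboolP => -[_ /(irr _ Sa)].
Qed.

Lemma rank_inj a b : S a -> S b -> rank a = rank b -> a = b.
Proof.
move=> Sa Sb E; have [_ _ tot] := R_total.
by case: (tot _ _ Sa Sb) => // /rank_lt; [move/(_ Sa Sb) | move/(_ Sb Sa)]; lia.
Qed.

Lemma rank_unbounded K : exists a, S a /\ K <= rank a.
Proof.
have [_ _ tot] := R_total.
elim: K => [|K [a [Sa Ka]]]; first by have [a [Sa _]] := S_unbounded 0; exists a.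
have [b [Sb Hb]] := S_unbounded (maxn (below_bound a) a.+1); exists b; split => //.
case: (tot _ _ Sa Sb) => [/(rank_lt Sa Sb) | E | /(below_boundP Sa Sb)]; first lia.
- by subst; lia.
- by lia.
Qed.

Lemma rank_down b k : S b -> k < rank b -> exists a, S a /\ rank a = k.
Proof.
move=> Sb lt; pose l := filter (below b) (iota 0 (below_bound b)).
have Sl c : c \in l -> S c /\ R c b by rewrite mem_filter => /andP[/pboolP].
have uniq_ranks : uniq (map rank l).
  rewrite map_inj_in_uniq ?filter_uniq ?iota_uniq // => c d /Sl[Sc _] /Sl[Sd _].
  exact: rank_inj.
have sub : {subset map rank l <= iota 0 (rank b)}.
  by move=> r /mapP[c /Sl[Sc Rc] ->]; rewrite mem_iota add0n; apply: rank_lt.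
have size_le : size (iota 0 (rank b)) <= size (map rank l).
  by rewrite size_map size_filter size_iota.
have [_ E] := uniq_min_size uniq_ranks sub size_le.
have : k \in map rank l by rewrite E mem_iota add0n.
by case/mapP => a /Sl[Sa _] ->; exists a.
Qed.

Lemma iso_to_nat : iso_to (LStruct S R) nat_lt.
Proof.
have [_ _ tot] := R_total; exists rank; split => /=.
- exact: rank_inj.
- move=> k; have [b [Sb Kb]] := rank_unbounded k.+1.
  by have [a [Sa Ea]] := rank_down Sb Kb; exists a.
- move=> a b Sa Sb; split; first exact: rank_lt.
  rewrite /nat_lt; case: (tot _ _ Sa Sb) => [// | -> | /(rank_lt Sb Sa)]; lia.
Qed.
End IsoToNat.

Lemma diag_iso_to (B C : lstruct) (T : Type) (R : T -> T -> Prop) :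
  (forall phi, diag B phi <-> diag C phi) -> iso_to C R -> iso_to B R.
Proof.
move=> E [f [inj sur ord]].
have D x : sdom B x <-> sdom C x.
  have [BC CB] := E (BPos (AEq x x)).
  by split => h; [case: (BC (And3 h h erefl)) | case: (CB (And3 h h erefl))].
have L x y : sdom B x -> sdom B y -> (slt B x y <-> slt C x y).
  move=> dx dy; have [BC CB] := E (BPos (ALt x y)).
  by split => h; [case: (BC (And3 dx dy h)) | case: (CB (And3 ((D x).1 dx) ((D y).1 dy) h))].
exists f; split.
- by move=> x y /D dx /D dy; apply: inj.
- by move=> t; have [x /D dx e] := sur t; exists x.
- by move=> x y dx dy; rewrite L // ord //; apply/D.
Qed.

Lemma iso_of_iso_to (X Y : lstruct) (T : Type) (R : T -> T -> Prop) :
  iso_to X R -> iso_to Y R -> iso X Y.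
Proof.
move=> [f [fi fs fo]] [g [gi gs go]].
pose ginv t := epsilon (inhabits 0) (fun y => sdom Y y /\ g y = t).
have ginvP t : sdom Y (ginv t) /\ g (ginv t) = t.
  have [y dy e] := gs t.
  exact: (epsilon_spec (inhabits 0) (fun y => sdom Y y /\ g y = t) (ex_intro _ y (conj dy e))).
exists (fun x => ginv (f x)); split.
- by move=> x; case: (ginvP (f x)).
- by move=> x y dx dy E; apply: fi => //; rewrite -(ginvP (f x)).2 -(ginvP (f y)).2 E.
- move=> y dy; have [x dx e] := fs (g y); exists x => //.
  by rewrite e; apply: gi => //; case: (ginvP (g y)).
- by move=> x y dx dy; rewrite fo // go ?(ginvP _).2 //; apply: (ginvP _).1.
Qed.

Lemma iso_iso_to (X Y : lstruct) (T : Type) (R : T -> T -> Prop) :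
  iso X Y -> iso_to Y R -> iso_to X R.
Proof.
move=> [h [h1 h2 h3 h4]] [g [gi gs go]]; exists (fun x => g (h x)); split.
- by move=> x y dx dy E; apply: h2 => //; apply: gi => //; apply: h1.
- by move=> t; have [y dy <-] := gs t; have [x dx <-] := h3 y dy; exists x.
- by move=> x y dx dy; rewrite h4 // go //; apply: h1.
Qed.

Lemma iso_to_least_no_least (X : lstruct) (T1 T2 : Type)
    (R1 : T1 -> T1 -> Prop) (R2 : T2 -> T2 -> Prop) :
  (forall s t, R1 s t -> ~ R1 t s) ->
  (exists t0, forall t, t <> t0 -> R1 t0 t) -> (forall t, exists t', R2 t' t) ->
  iso_to X R1 -> ~ iso_to X R2.
Proof.
move=> asym [t0 least] no_least [f [_ fs fo]] [g [_ gs go]].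
have [x0 dx0 e0] := fs t0; have [t' lt'] := no_least (g x0); have [x1 dx1 e1] := gs t'.
have : R1 (f x1) t0 by rewrite -e0; apply/fo => //; apply/go => //; rewrite e1.
move=> lt; case: (classic (f x1 = t0)) => [E | ne]; last exact: asym lt (least _ ne).
by rewrite E in lt; exact: (asym _ _ lt lt).
Qed.

(** * The pair order and the enumeration operator *)

Definition pair_dom (A : lstruct) (c : nat) : Prop :=
  [/\ sdom A (unpair c).1, sdom A (unpair c).2, slt A (unpair c).2 (unpair c).1 &
      exists w, [/\ sdom A w, slt A (unpair c).1 w & (unpair c).2 < w]].

Definition pair_lt (A : lstruct) (c d : nat) : Prop :=
  slt A (unpair c).1 (unpair d).1 \/
  ((unpair c).1 = (unpair d).1 /\ slt A (unpair c).2 (unpair d).2).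

Definition pair_order (A : lstruct) := LStruct (pair_dom A) (pair_lt A).

(* Rule [k] derives the fact [rule_concl k] about [<x, y>] and [<x', y'>] in [pair_order A]
   from the facts placing both pairs in [pair_dom A] and the comparison [rule_premise k] in A;
   the rules k = 0, ..., 6 cover all atomic and negated atomic facts of [pair_order A]. *)
Definition rule_premise (k x y x' y' : nat) : nat * nat :=
  match k with 1 => (x, x') | 2 => (y, y') | 3 => (x', x) | 4 => (y', y) | _ => (y, x) end.

Definition rule_applies (k x y x' y' : nat) : Prop :=
  match k with
  | 0 | 5 => x = x' /\ y = y'
  | 1 | 3 => True
  | 2 | 4 => x = x'
  | 6 => (x, y) <> (x', y')
  | _ => False
  end.

Definition rule_concl (k c d : nat) : bsent :=
  match k with
  | 0 => BPos (AEq c d)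
  | 1 | 2 => BPos (ALt c d)
  | 6 => BNeg (AEq c d)
  | _ => BNeg (ALt c d)
  end.

Definition rule_premises k x y w x' y' w' : seq bsent :=
  [:: BPos (ALt y x); BPos (ALt x w); BPos (ALt y' x'); BPos (ALt x' w');
      BPos (ALt (rule_premise k x y x' y').1 (rule_premise k x y x' y').2)].

Definition pair_op : enum_op := fun p =>
  exists k x y w x' y' w', [/\ y < w, y' < w', rule_applies k x y x' y' &
    p = (rule_premises k x y w x' y' w', rule_concl k (cpair x y) (cpair x' y'))].

Definition rule_guard (k x y x' y' : nat) : nat :=
  if_eqn k 1 0 (if_eqn k 3 0 (if_eqn k 2 (if_eqn x x' 0 1) (if_eqn k 4 (if_eqn x x' 0 1)
  (if_eqn k 6 (if_eqn x x' (if_eqn y y' 1 0) 0)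
  (if_ltn k 7 (if_eqn x x' (if_eqn y y' 0 1) 1) 1))))).

Lemma rule_guardP k x y x' y' : rule_guard k x y x' y' = 0 <-> rule_applies k x y x' y'.
Proof.
rewrite /rule_guard /if_eqn /if_ltn.
do 7?[case: k => [|k]] => /=; rewrite ?ltnS ?ltn0 //;
  by repeat case: eqP => ? //=; subst; intuition congruence.
Qed.

Definition lt_code a b := CodeSeq.code [:: 1; CodeSeq.code [:: 0; CodeSeq.code [:: a; b]]].

Definition premise_code k x y x' y' :=
  lt_code (if_eqn k 1 x (if_eqn k 2 y (if_eqn k 3 x' (if_eqn k 4 y' y))))
          (if_eqn k 1 x' (if_eqn k 2 y' (if_eqn k 3 x (if_eqn k 4 y x)))).

Definition concl_code k c d :=
  CodeSeq.code [:: if_ltn k 3 1 0;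
                   CodeSeq.code [:: if_eqn k 0 1 (if_eqn k 6 1 0); CodeSeq.code [:: c; d]]].

Definition rule_code k x y w x' y' w' :=
  CodeSeq.code [:: CodeSeq.code [:: lt_code y x; lt_code x w; lt_code y' x'; lt_code x' w';
                                   premise_code k x y x' y'];
                   concl_code k (cpair x y) (cpair x' y')].

Lemma pickle_rule k x y w x' y' w' :
  pickle (rule_premises k x y w x' y' w', rule_concl k (cpair x y) (cpair x' y')) =
  rule_code k x y w x' y' w'.
Proof. by do 7?[case: k => [|k]]. Qed.

(* [rule_search (cpair n t) = 0] iff [t] codes [<k, <x, <y, <w, <x', <y', <w', 0>>>>>>>] for
   an instance of rule [k] that belongs to [pair_op] and has code [n]. *)
Local Notation search_arg i v := (unpair_nth i (unpair v).2).

Definition rule_search (v : nat) : nat :=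
  if_eqn (unpair v).1 (rule_code (search_arg 0 v) (search_arg 1 v) (search_arg 2 v)
                        (search_arg 3 v) (search_arg 4 v) (search_arg 5 v) (search_arg 6 v)) 0 1
  + if_ltn (search_arg 2 v) (search_arg 3 v) 0 1 + if_ltn (search_arg 5 v) (search_arg 6 v) 0 1
  + rule_guard (search_arg 0 v) (search_arg 1 v) (search_arg 2 v) (search_arg 4 v) (search_arg 5 v).

Lemma computable_rule_search : computable rule_search.
Proof.
rewrite /rule_search /rule_code /premise_code /concl_code /lt_code /rule_guard.
solve_computable.
Qed.

Lemma ce_set_ext (S1 S2 : nat -> Prop) : (forall n, S1 n <-> S2 n) -> ce_set S1 -> ce_set S2.
Proof. by move=> E [c Hc]; exists c => x; rewrite -E. Qed.

Lemma is_enum_op_pair_op : is_enum_op pair_op.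
Proof.
apply: ce_set_ext (ce_set_zeros computable_rule_search) => n; split.
  case=> t; rewrite /rule_search /if_eqn /if_ltn unpair_cpair /=.
  case: eqP => // ->; case: ltnP => // yw; case: ltnP => // yw'; rewrite !add0n => /rule_guardP ok.
  eexists; split; first exact: pickle_rule.
  by do 7 eexists; split; [exact: yw | exact: yw' | exact: ok |].
case=> _ [<- [k [x [y [w [x' [y' [w' [yw yw' /rule_guardP ok ->]]]]]]]]].
exists (cpair k (cpair x (cpair y (cpair w (cpair x' (cpair y' (cpair w' 0))))))).
rewrite /rule_search unpair_cpair /= !(unpair_nth0, unpair_nthS) pickle_rule.
by rewrite /if_eqn /if_ltn eqxx yw yw' ok.
Qed.

Lemma pair_dom_cpair A x y w : y < w ->
  diag A (BPos (ALt y x)) -> diag A (BPos (ALt x w)) -> pair_dom A (cpair x y).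
Proof.
by move=> yw [dy dx yx] [_ dw xw]; rewrite /pair_dom unpair_cpair; split => //; exists w.
Qed.

Lemma pair_dom_witness A c : pair_dom A c -> exists2 w, (unpair c).2 < w &
  diag A (BPos (ALt (unpair c).2 (unpair c).1)) /\ diag A (BPos (ALt (unpair c).1 w)).
Proof. by case=> dx dy yx [w [dw xw yw]]; exists w. Qed.

Lemma pair_order_total A : strict_total (sdom A) (slt A) -> strict_total (pair_dom A) (pair_lt A).
Proof.
move=> [irr trans tot]; split.
- by move=> a [dx dy _ _] [h | [_ h]]; [apply: irr dx h | apply: irr dy h].
- move=> a b c [dxa dya _ _] [dxb dyb _ _] [dxc dyc _ _].
  case=> [h1 | [e1 h1]] [h2 | [e2 h2]].
  + by left; apply: trans h1 h2.
  + by left; rewrite -e2.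
  + by left; rewrite e1.
  + by right; split; [rewrite e1 | apply: trans h1 h2].
- move=> a b [dxa dya _ _] [dxb dyb _ _]; rewrite /pair_lt.
  case: (tot _ _ dxa dxb) => [h | e | h]; [by constructor 1; left | | by constructor 3; left].
  case: (tot _ _ dya dyb) => [h | e2 | h]; [by constructor 1; right | | by constructor 3; right].
  by constructor 2; rewrite -(cpair_unpair a) -(cpair_unpair b) e e2.
Qed.

Lemma diag_rule_premises A k x y w x' y' w' :
  (forall s, s \in rule_premises k x y w x' y' w' -> diag A s) <->
  [/\ diag A (BPos (ALt y x)), diag A (BPos (ALt x w)), diag A (BPos (ALt y' x')),
      diag A (BPos (ALt x' w'))
    & diag A (BPos (ALt (rule_premise k x y x' y').1 (rule_premise k x y x' y').2))].
Proof.
split=> [H | [h1 h2 h3 h4 h5] s]; first by split; apply: H; rewrite !inE eqxx ?orbT.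
by rewrite !inE; do ![case/orP=> [/eqP-> //|] | move/eqP->].
Qed.

Section PairOpDiagram.
Variable A : lstruct.
Hypothesis A_total : strict_total (sdom A) (slt A).

Lemma pair_op_sound phi : apply_op pair_op (diag A) phi -> diag (pair_order A) phi.
Proof.
have [irr trans _] := A_total.
case=> _ [[k [x [y [w [x' [y' [w' [yw yw' ok [-> ->]]]]]]]]] /diag_rule_premises[h1 h2 h3 h4]].
have Bc := pair_dom_cpair yw h1 h2; have Bd := pair_dom_cpair yw' h3 h4.
move: h1 h2 h3 h4 => [dy dx _] _ [dy' dx' _] _.
case: k ok => [|[|[|[|[|[|[|//]]]]]]] /= ok [_ _ /= lt]; split => //;
  rewrite /pair_lt ?unpair_cpair /=.
- by case: ok => -> ->.
- by left.
- by right.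
- by case=> [h | [e _]]; [apply: irr dx (trans _ _ _ dx dx' dx h lt) | subst; exact: irr lt].
- by rewrite ok => -[h | [_ h]]; [exact: irr dx' h | exact: irr dy (trans _ _ _ dy dy' dy h lt)].
- by case: ok => -> -> [h | [_ h]]; [exact: irr dx' h | exact: irr dy' h].
- by move/cpair_inj=> [ex ey]; apply: ok; rewrite ex ey.
Qed.

Lemma pair_op_rule k c d : pair_dom A c -> pair_dom A d ->
  rule_applies k (unpair c).1 (unpair c).2 (unpair d).1 (unpair d).2 ->
  diag A (BPos (ALt (rule_premise k (unpair c).1 (unpair c).2 (unpair d).1 (unpair d).2).1
                    (rule_premise k (unpair c).1 (unpair c).2 (unpair d).1 (unpair d).2).2)) ->
  apply_op pair_op (diag A) (rule_concl k c d).
Proof.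
move=> /pair_dom_witness[w yw [h1 h2]] /pair_dom_witness[w' yw' [h3 h4]] ok h5.
rewrite -(cpair_unpair c) -(cpair_unpair d).
exists (rule_premises k (unpair c).1 (unpair c).2 w (unpair d).1 (unpair d).2 w').
by split; [do 7 eexists; split; [exact: yw | exact: yw' | exact: ok |] | exact/diag_rule_premises].
Qed.

Lemma pair_op_complete phi : diag (pair_order A) phi -> apply_op pair_op (diag A) phi.
Proof.
have [irr _ tot] := A_total.
case: phi => [[c d | c d] | [c d | c d]] /= [Bc Bd].
- move=> <-; apply: (@pair_op_rule 0) => //; by case: Bc.
- move: (Bc) (Bd) => [dx dy yx _] [dx' dy' yx' _] [lt | [e lt]].
    by apply: (@pair_op_rule 1).
  by apply: (@pair_op_rule 2).
- move=> ne; apply: (@pair_op_rule 6) => //=; last by case: Bc.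
  by case=> ex ey; apply: ne; rewrite -(cpair_unpair c) -(cpair_unpair d) ex ey.
- move: (Bc) (Bd) => [dx dy yx _] [dx' dy' yx' _] nlt.
  case: (tot _ _ dx dx') => [lt | ex | lt]; first by case: nlt; left.
    case: (tot _ _ dy dy') => [lt | ey | lt]; first by case: nlt; right.
      by apply: (@pair_op_rule 5).
    by apply: (@pair_op_rule 4).
  by apply: (@pair_op_rule 3).
Qed.

Lemma apply_pair_op phi : apply_op pair_op (diag A) phi <-> diag (pair_order A) phi.
Proof. by split; [exact: pair_op_sound | exact: pair_op_complete]. Qed.
End PairOpDiagram.

(** * Coordinates in ω·m and ω*·m *)

Definition omega_coords (A : lstruct) (m : nat) (up : bool) (Q K : nat -> nat) :=
 [/\ forall x, sdom A x -> Q x < m,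
     forall x y, sdom A x -> sdom A y -> Q x = Q y -> K x = K y -> x = y,
     forall q k, q < m -> exists x, [/\ sdom A x, Q x = q & K x = k]
   & forall x y, sdom A x -> sdom A y ->
       (slt A x y <-> Q x < Q y \/ (Q x = Q y /\ (if up then K x < K y else K y < K x)))].

Lemma omega_coords_of_iso (A : lstruct) m (up : bool) :
  iso_to A (lex (@ord_lt m) (fun a b : nat => if up then nat_lt a b else nat_lt b a)) ->
  exists Q K, omega_coords A m up Q K.
Proof.
move=> [f [inj sur ord]]; exists (fun x => nat_of_ord (f x).1), (fun x => (f x).2); split.
- by move=> x _; case: (f x).1.
- move=> x y dx dy E1 E2; apply: inj => //.
  by case: (f x) (f y) E1 E2 => [i k] [j l] /= /val_inj -> ->.
- by move=> q k lt; have [x dx E] := sur (Ordinal lt, k); exists x; rewrite E.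
- move=> x y dx dy; rewrite ord // /lex /ord_lt /nat_lt.
  by split=> -[h | [h1 h2]]; [left | right; split; [rewrite h1 | case: up h2 {ord}] |
                             left | right; split; [apply: val_inj | case: up h2 {ord}]].
Qed.

Lemma omega_times_coords A m :
  iso_to A (@ot_lt (omega_times m)) -> exists Q K, omega_coords A m true Q K.
Proof. exact: (@omega_coords_of_iso A m true). Qed.

Lemma omegastar_times_coords A m :
  iso_to A (@ot_lt (omegastar_times m)) -> exists Q K, omega_coords A m false Q K.
Proof. exact: (@omega_coords_of_iso A m false). Qed.

Section OmegaCoords.
Variables (A : lstruct) (m : nat) (up : bool) (Q K : nat -> nat).
Hypothesis coords : omega_coords A m up Q K.

Lemma omega_coords_total : strict_total (sdom A) (slt A).
Proof.
have [_ inj _ ord] := coords; split.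
- by move=> a da; rewrite ord //; case: up; lia.
- by move=> a b c da db dc; rewrite !ord //; case: up; lia.
- move=> a b da db; have /iffRL ab := ord a b da db; have /iffRL ba := ord b a db da.
  case: (ltngtP (Q a) (Q b)) => hQ; first by constructor 1; apply: ab; left.
    by constructor 3; apply: ba; left.
  case: (ltngtP (K a) (K b)) => hK; last by constructor 2; apply: inj.
  + by case: up ab ba => ab ba; [constructor 1; apply: ab | constructor 3; apply: ba]; right.
  + by case: up ab ba => ab ba; [constructor 3; apply: ba | constructor 1; apply: ab]; right.
Qed.

Definition coord_point q k :=
  epsilon (inhabits 0) (fun x => [/\ sdom A x, Q x = q & K x = k]).

Lemma coord_pointP q k : q < m ->
  [/\ sdom A (coord_point q k), Q (coord_point q k) = q & K (coord_point q k) = k].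
Proof.
have [_ _ ex _] := coords => lt.
exact: (epsilon_spec (inhabits 0) (fun x => [/\ sdom A x, Q x = q & K x = k]) (ex q k lt)).
Qed.

Lemma omega_coords_bounded k0 : exists N, forall x, sdom A x -> K x <= k0 -> x < N.
Proof.
have [Qm inj _ _] := coords.
exists (\max_(q < m) \max_(k < k0.+1) coord_point q k).+1 => x dx le.
have [d1 e1 e2] := coord_pointP (K x) (Qm x dx).
have -> : x = coord_point (Q x) (K x) by apply: inj.
rewrite ltnS (bigmax_sup (Ordinal (Qm x dx))) //=.
by rewrite (bigmax_sup (Ordinal (_ : K x < k0.+1))).
Qed.

Lemma omega_coords_unbounded q k0 N : q < m ->
  exists x, [/\ sdom A x, Q x = q, k0 <= K x & N <= x].
Proof.
move=> lt; apply: NNPP => H.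
have small r : coord_point q (k0 + r) < N.
  have [d e1 e2] := coord_pointP (k0 + r) lt.
  case: (leqP N (coord_point q (k0 + r))) => // h.
  by case: H; exists (coord_point q (k0 + r)); split => //; lia.
pose g (r : 'I_N.+1) : 'I_N := Ordinal (small r).
have g_inj : injective g.
  move=> r s /(congr1 val) /= E; apply: val_inj => /=.
  have [_ _ f1] := coord_pointP (k0 + r) lt; have [_ _ f2] := coord_pointP (k0 + s) lt.
  by have := congr1 K E; rewrite f1 f2; lia.
by have := leq_card g g_inj; rewrite !card_ord; lia.
Qed.
End OmegaCoords.

(** * The image of ω·(n+2) *)

Lemma mulnD_small_inj q a b c d : b < q -> d < q -> a * q + b = c * q + d -> a = c /\ b = d.
Proof.
move=> hb hd E; have q0 : 0 < q by apply: leq_ltn_trans hb.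
have := congr1 (divn^~ q) E; have := congr1 (modn^~ q) E.
by rewrite /= !modnMDl !modn_small // !divnMDl // !divn_small // !addn0.
Qed.

Lemma mulnD_small_lt q a b c d :
  b < q -> d < q -> a * q + b < c * q + d -> a < c \/ (a = c /\ b < d).
Proof.
move=> hb hd lt; case: (ltnP a c) => [ac | ca]; [by left | right].
have ac : a = c by apply/eqP; rewrite eqn_leq ca andbT; apply: contraTT lt; rewrite -ltnNge; nia.
by split => //; subst; rewrite ltn_add2l in lt.
Qed.

(* Index of the ω-slice of the pair (x, y) inside its ω²-block, for x at position k of copy
   q of ω and y in copy j.  For q >= 1 the y in copy j < q give slice k*q + j, and the k
   elements of copy q below x are absorbed into the next slice.  Copy 0 only yields finite
   segments, which together form slice 0 of block 0; [omega_block] merges it with copy 1. *)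
Definition omega_slice (i q k j : nat) : nat :=
  if q == 0 then 0 else if j < q then (i == 0) + k * q + j else (i == 0) + k.+1 * q.

Lemma omega_slice_bounded i qa ka ja ma qb kb jb mb :
  (ja < qa \/ (ja = qa /\ ma < ka)) -> (jb < qb \/ (jb = qb /\ mb < kb)) ->
  qa.-1 = i -> qb.-1 = i -> omega_slice i qa ka ja = omega_slice i qb kb jb ->
  (qb < qa \/ (qb = qa /\ kb < ka) \/ (qb = qa /\ kb = ka /\ (jb < ja \/ (jb = ja /\ mb < ma)))) ->
  kb <= ka + ma /\ mb <= ka + ma.
Proof.
rewrite /omega_slice => ya yb ia ib E lt.
case: (eqVneq qa 0) => [qa0 | qa0] in E *.
  by subst qa; case: (eqVneq qb 0) => [qb0 | qb0] in E *; [subst qb | move: E; case: ltnP]; lia.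
case: (eqVneq qb 0) => [qb0 | qb0] in E *; first by move: E; case: ltnP; lia.
have Eq : qa = qb by lia.
subst qb; case: (ltnP jb qa) => hb in E *; last by lia.
case: (ltnP ja qa) => ha in E *.
  by have [] := @mulnD_small_inj qa kb jb ka ja hb ha ltac:(lia); lia.
by have [] := @mulnD_small_inj qa kb jb ka.+1 0 hb ltac:(lia) ltac:(lia); lia.
Qed.

Lemma omega_slice_mono i qa ka ja ma qb kb jb mb :
  (ja < qa \/ (ja = qa /\ ma < ka)) -> (jb < qb \/ (jb = qb /\ mb < kb)) ->
  qa.-1 = i -> qb.-1 = i -> omega_slice i qa ka ja < omega_slice i qb kb jb ->
  (qa < qb \/ (qa = qb /\ ka < kb) \/ (qa = qb /\ ka = kb /\ (ja < jb \/ (ja = jb /\ ma < mb)))).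
Proof.
rewrite /omega_slice => ya yb ia ib E.
case: (eqVneq qa 0) => [qa0 | qa0] in E *.
  by subst qa; case: (eqVneq qb 0) => [qb0 | qb0] in E *; [subst | ]; lia.
case: (eqVneq qb 0) => [qb0 | qb0] in E *; first lia.
have Eq : qa = qb by lia.
subst qb; have q0 : 0 < qa by lia.
case: (ltnP ja qa) => ha in E *; case: (ltnP jb qa) => hb in E *.
- by have := @mulnD_small_lt qa ka ja kb jb ha hb ltac:(lia); lia.
- by have := @mulnD_small_lt qa ka ja kb.+1 0 ha q0 ltac:(lia); lia.
- by have := @mulnD_small_lt qa ka.+1 0 kb jb q0 hb ltac:(lia); lia.
- by have := @mulnD_small_lt qa ka.+1 0 kb.+1 0 q0 q0 ltac:(lia); lia.
Qed.

Section OmegaCase.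
Variables (A : lstruct) (n : nat) (Q K : nat -> nat).
Hypothesis coords : omega_coords A n.+2 true Q K.

Local Notation X c := (unpair c).1.
Local Notation Y c := (unpair c).2.

Lemma omega_ltE a b : sdom A a -> sdom A b ->
  (slt A a b <-> Q a < Q b \/ (Q a = Q b /\ K a < K b)).
Proof. by have [_ _ _ ord] := coords; apply: ord. Qed.

Lemma omega_pair_domE c : pair_dom A c <-> [/\ sdom A (X c), sdom A (Y c) & slt A (Y c) (X c)].
Proof.
split=> [[] // | [dx dy yx]]; split => //; have [Qm _ _ _] := coords.
have [w [dw e1 e2 e3]] := omega_coords_unbounded coords (K (X c)).+1 (Y c).+1 (Qm _ dx).
by exists w; split => //; apply/omega_ltE => //; lia.
Qed.

Lemma omega_pair_ltE a b : pair_dom A a -> pair_dom A b ->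
  (pair_lt A a b <-> Q (X a) < Q (X b) \/ (Q (X a) = Q (X b) /\ K (X a) < K (X b)) \/
     (Q (X a) = Q (X b) /\ K (X a) = K (X b) /\
       (Q (Y a) < Q (Y b) \/ (Q (Y a) = Q (Y b) /\ K (Y a) < K (Y b))))).
Proof.
move=> [dxa dya _ _] [dxb dyb _ _]; have [_ inj _ _] := coords.
rewrite /pair_lt (omega_ltE dxa dxb) (omega_ltE dya dyb).
by split=> [[|[/[dup] -> ]]|[|[|[? [? ?]]]]]; try tauto; right; split => //; apply: inj.
Qed.

Lemma omega_pair_below c : pair_dom A c ->
  Q (Y c) < Q (X c) \/ (Q (Y c) = Q (X c) /\ K (Y c) < K (X c)).
Proof. by case=> dx dy yx _; apply/omega_ltE. Qed.

Definition omega_block c : 'I_n.+1 := inord (Q (X c)).-1.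

Definition omega_pair_slice (i : nat) c := omega_slice i (Q (X c)) (K (X c)) (Q (Y c)).

Lemma omega_blockE c (i : 'I_n.+1) : pair_dom A c -> omega_block c = i <-> (Q (X c)).-1 = i.
Proof.
move=> [dx _ _ _]; have [Qm _ _ _] := coords; have := Qm _ dx => lt.
rewrite /omega_block; split => [<- | E]; first by rewrite inordK; lia.
by apply: val_inj; rewrite /= inordK; lia.
Qed.

Lemma omega_pair_total : strict_total (pair_dom A) (pair_lt A).
Proof. exact/pair_order_total/omega_coords_total/coords. Qed.

Lemma omega_pair_bounded k0 : exists N, forall b, pair_dom A b ->
  K (X b) <= k0 -> K (Y b) <= k0 -> b < N.
Proof.
have [N HN] := omega_coords_bounded coords k0; exists (cpair N N).+1 => b [dx dy _ _] h1 h2.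
by rewrite -(cpair_unpair b) ltnS; apply: leq_cpair; apply: ltnW; apply: HN.
Qed.

Let in_slice (i : 'I_n.+1) s a := (pair_dom A a /\ omega_block a = i) /\ omega_pair_slice i a = s.

Lemma omega_slice_finite_below i s a : in_slice i s a ->
  exists N, forall b, in_slice i s b -> pair_lt A b a -> b < N.
Proof.
move=> [[Ba /(omega_blockE _ Ba) ia] sa].
have [N HN] := omega_pair_bounded (K (X a) + K (Y a)).
exists N => b [[Bb /(omega_blockE _ Bb) ib] sb] lt.
have := omega_slice_bounded (omega_pair_below Ba) (omega_pair_below Bb) ia ib.
rewrite -[omega_slice _ _ _ _]/(omega_pair_slice i a) sa -sb.
move=> /(_ erefl ((omega_pair_ltE Bb Ba).1 lt)).
by case; apply: HN.
Qed.

Lemma omega_slice_unbounded i s N : exists a, in_slice i s a /\ N <= a.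
Proof.
have [Qm _ _ _] := coords; have pos : 0 < n.+2 by [].
case: (boolP ((i == 0 :> nat) && (s == 0))) => [/andP[/eqP i0 /eqP s0] | nz].
  have [x [dx qx kx nx]] := omega_coords_unbounded coords 1 N pos.
  have [dy qy ky] := coord_pointP coords 0 pos; set y := coord_point A Q K 0 0 in dy qy ky *.
  have B : pair_dom A (cpair x y).
    by apply/omega_pair_domE; rewrite unpair_cpair /=; split => //; apply/omega_ltE => //; lia.
  exists (cpair x y); split; last exact: leq_trans nx (cpair_geL _ _).
  split; first by split => //; apply/(omega_blockE _ B); rewrite unpair_cpair /= qx i0.
  by rewrite /omega_pair_slice /omega_slice unpair_cpair /= qx s0.
pose q := i.+1; pose s' := s - (i == 0 :> nat).
have jq : s' %% q < q by rewrite ltn_mod.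
have qlt : q < n.+2 by rewrite /q ltnS ltn_ord.
have [dx qx kx] := coord_pointP coords (s' %/ q) qlt.
set x := coord_point A Q K q (s' %/ q) in dx qx kx *.
have [y [dy qy ky ny]] := omega_coords_unbounded coords 0 N (ltn_trans jq qlt).
have B : pair_dom A (cpair x y).
  by apply/omega_pair_domE; rewrite unpair_cpair /=; split => //; apply/omega_ltE => //; lia.
exists (cpair x y); split; last exact: leq_trans ny (cpair_geR _ _).
split; first by split => //; apply/(omega_blockE _ B); rewrite unpair_cpair /= qx.
rewrite /omega_pair_slice /omega_slice unpair_cpair /= qx kx qy jq /=.
by have := divn_eq s' q; move: nz; rewrite /s'; case: (i == 0 :> nat) => /=; lia.
Qed.

Lemma omega_slice_iso i s : iso_to (LStruct (in_slice i s) (pair_lt A)) nat_lt.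
Proof.
apply: iso_to_nat; [ | exact: omega_slice_finite_below | exact: omega_slice_unbounded].
by apply: strict_total_sub omega_pair_total _ => a [[]].
Qed.

Lemma omega_block_iso (i : 'I_n.+1) :
  iso_to (LStruct (fun a => pair_dom A a /\ omega_block a = i) (pair_lt A)) omega2_lt.
Proof.
have total := strict_total_sub omega_pair_total
  (fun a (h : pair_dom A a /\ omega_block a = i) => h.1).
apply: (@iso_to_lex nat nat nat_lt nat_lt _ _ (omega_pair_slice i)).
- exact: strict_total_asym total.
- by rewrite /nat_lt => a b; lia.
- by rewrite /nat_lt => a b; lia.
- move=> a b [Ba /(omega_blockE _ Ba) ia] [Bb /(omega_blockE _ Bb) ib] lt.
  apply/(omega_pair_ltE Ba Bb).
  exact: (omega_slice_mono (ma := K (Y a)) (mb := K (Y b))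
           (omega_pair_below Ba) (omega_pair_below Bb) ia ib lt).
- exact: omega_slice_iso.
Qed.

Lemma omega_pair_order_iso : iso_to (pair_order A) (lex (@ord_lt n.+1) omega2_lt).
Proof.
apply: (@iso_to_lex _ _ _ _ _ _ omega_block).
- exact: strict_total_asym omega_pair_total.
- by rewrite /ord_lt => a b; lia.
- by rewrite /ord_lt => a b ne; case: (ltngtP a b) => h; [left | right | case: ne; apply: val_inj].
- move=> a b Ba Bb; have [Qm _ _ _] := coords; move: (Ba) (Bb) => [dxa _ _ _] [dxb _ _ _].
  have := Qm _ dxa; have := Qm _ dxb; rewrite /ord_lt /omega_block => qb qa.
  by rewrite !inordK; try lia; move=> lt; apply/(omega_pair_ltE Ba Bb); lia.
- by move=> i; apply: omega_block_iso.
Qed.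
End OmegaCase.

(** * The image of ω*·(n+2) *)

Section OmegaStarCase.
Variables (A : lstruct) (n : nat) (Q K : nat -> nat).
Hypothesis coords : omega_coords A n.+2 false Q K.

Local Notation X c := (unpair c).1.
Local Notation Y c := (unpair c).2.

Lemma omegastar_ltE a b : sdom A a -> sdom A b ->
  (slt A a b <-> Q a < Q b \/ (Q a = Q b /\ K b < K a)).
Proof. by have [_ _ _ ord] := coords; apply: ord. Qed.

Lemma omegastar_pair_ltE a b : pair_dom A a -> pair_dom A b ->
  (pair_lt A a b <-> Q (X a) < Q (X b) \/ (Q (X a) = Q (X b) /\ K (X b) < K (X a)) \/
     (Q (X a) = Q (X b) /\ K (X a) = K (X b) /\
       (Q (Y a) < Q (Y b) \/ (Q (Y a) = Q (Y b) /\ K (Y b) < K (Y a))))).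
Proof.
move=> [dxa dya _ _] [dxb dyb _ _]; have [_ inj _ _] := coords.
rewrite /pair_lt (omegastar_ltE dxa dxb) (omegastar_ltE dya dyb).
by split=> [[|[/[dup] -> ]]|[|[|[? [? ?]]]]]; try tauto; right; split => //; apply: inj.
Qed.

Lemma omegastar_pair_below c : pair_dom A c ->
  Q (Y c) < Q (X c) \/ (Q (Y c) = Q (X c) /\ K (X c) < K (Y c)).
Proof. by case=> dx dy yx _; apply/omegastar_ltE. Qed.

Lemma omegastar_block_lt c : pair_dom A c -> Q (X c) < n.+2.
Proof. by case=> dx _ _ _; have [Qm _ _ _] := coords; apply: Qm. Qed.

Definition omegastar_block c : 'I_n.+1 := inord (minn (Q (X c)) n).

(* Slices are counted in the reversed order.  For x at position k of copy q <= n, the y in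
   copy j <= q give slice k*(q+1) + (q - j).  The last copy n+1 only contributes an ω*, which
   [omegastar_block] places as slice 0 of the last block. *)
Definition omegastar_slice (i q k j : nat) : nat :=
  if q == n.+1 then 0 else (i == n) + k * q.+1 + (q - j).

Definition omegastar_pair_slice (i : nat) c := omegastar_slice i (Q (X c)) (K (X c)) (Q (Y c)).

Lemma omegastar_blockE c (i : 'I_n.+1) :
  pair_dom A c -> omegastar_block c = i <-> minn (Q (X c)) n = i.
Proof.
move=> /omegastar_block_lt lt.
rewrite /omegastar_block; split => [<- | E]; first by rewrite inordK; lia.
by apply: val_inj; rewrite /= inordK; lia.
Qed.

Lemma omegastar_pair_total : strict_total (pair_dom A) (pair_lt A).
Proof. exact/pair_order_total/omega_coords_total/coords. Qed.

Lemma omegastar_pair_bounded k0 N1 : exists N, forall b, pair_dom A b -> K (X b) <= k0 ->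
  (K (Y b) <= k0 \/ Y b < N1) -> b < N.
Proof.
have [N HN] := omega_coords_bounded coords k0.
exists (cpair (maxn N N1) (maxn N N1)).+1 => b [dx dy _ _] h1 h2.
rewrite -(cpair_unpair b) ltnS; apply: leq_cpair; first by have := HN _ dx h1; lia.
by case: h2 => [/(HN _ dy) |]; lia.
Qed.

Let in_slice (i : 'I_n.+1) s a :=
  (pair_dom A a /\ omegastar_block a = i) /\ omegastar_pair_slice i a = s.

Lemma omegastar_last_bounded a : pair_dom A a -> Q (X a) = n.+1 ->
  exists N, forall b, pair_dom A b -> Q (X b) = n.+1 -> pair_lt A a b -> b < N.
Proof.
move=> Ba qa; have [Nw HNw] := omega_coords_bounded coords (K (X a)).
have [N HN] := omegastar_pair_bounded (K (X a)) Nw.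
exists N => b Bb qb /(omegastar_pair_ltE Ba Bb) lt.
have kb : K (X b) <= K (X a) by lia.
apply: HN => //; right; move: (Bb) => [dxb _ _ [w [dw /(omegastar_ltE dxb dw) xw yw]]].
have [Qm _ _ _] := coords; have := Qm _ dw => wm.
by have := HNw _ dw (_ : K w <= K (X a)); lia.
Qed.

Lemma omegastar_slice_finite_below i s a : in_slice i s a ->
  exists N, forall b, in_slice i s b -> pair_lt A a b -> b < N.
Proof.
move=> [[Ba /(omegastar_blockE _ Ba) ia] sa]; have qa := omegastar_block_lt Ba.
have ya := omegastar_pair_below Ba.
case: (eqVneq (Q (X a)) n.+1) => [qa1 | qa1].
  have [N HN] := omegastar_last_bounded Ba qa1; exists N => b [[Bb /(omegastar_blockE _ Bb) ib] sb].
  apply: HN => //; have := omegastar_block_lt Bb; move: sa sb.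
  by rewrite /omegastar_pair_slice /omegastar_slice qa1 eqxx => <-; case: eqP => // _; lia.
have [N HN] := omegastar_pair_bounded (K (X a) + K (Y a)) 0.
exists N => b [[Bb /(omegastar_blockE _ Bb) ib] sb] /(omegastar_pair_ltE Ba Bb) lt.
have qb := omegastar_block_lt Bb; have yb := omegastar_pair_below Bb.
move: sa sb; rewrite /omegastar_pair_slice /omegastar_slice (negbTE qa1).
case: (eqVneq (Q (X b)) n.+1) => [qb1 | qb1] sa sb.
  have iE : (i : nat) = n by lia.
  by move: sa sb; rewrite iE eqxx /=; lia.
have Eq : Q (X b) = Q (X a) by lia.
rewrite Eq in sb; have lt_q j : Q (X a) - j < (Q (X a)).+1 by lia.
have E : K (X b) * (Q (X a)).+1 + (Q (X a) - Q (Y b)) =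
         K (X a) * (Q (X a)).+1 + (Q (X a) - Q (Y a)) by lia.
by have [] := mulnD_small_inj (lt_q _) (lt_q _) E; move=> *; apply: HN => //; lia.
Qed.

Lemma omegastar_slice_unbounded i s N : exists a, in_slice i s a /\ N <= a.
Proof.
have [Qm _ _ _] := coords; have pos : 0 < n.+2 by [].
case: (boolP (((i : nat) == n) && (s == 0))) => [/andP[/eqP iE /eqP s0] | nz].
  have [dy qy ky] := coord_pointP coords 0 pos; set y := coord_point A Q K 0 0 in dy qy ky *.
  have [w [dw qw _ nw]] := omega_coords_unbounded coords 0 y.+1 (ltnSn n.+1).
  have [x [dx qx kx nx]] := omega_coords_unbounded coords (K w).+1 N (ltnSn n.+1).
  have B : pair_dom A (cpair x y).
    rewrite /pair_dom unpair_cpair /=; split => //; first by apply/omegastar_ltE => //; lia.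
    by exists w; split => //; apply/omegastar_ltE => //; lia.
  exists (cpair x y); split; last exact: leq_trans nx (cpair_geL _ _).
  split; first by split => //; apply/(omegastar_blockE _ B); rewrite unpair_cpair /= qx; lia.
  by rewrite /omegastar_pair_slice /omegastar_slice unpair_cpair /= qx eqxx s0.
pose q := (i : nat); pose s' := s - (q == n).
have qle : q <= n by rewrite -ltnS ltn_ord.
have rq : s' %% q.+1 < q.+1 by rewrite ltn_mod.
have [qlt qylt qwlt] : [/\ q < n.+2, q - s' %% q.+1 < n.+2 & q.+1 < n.+2] by split; lia.
have [dx qx kx] := coord_pointP coords (s' %/ q.+1) qlt.
set x := coord_point A Q K q (s' %/ q.+1) in dx qx kx *.
have [y [dy qy ky ny]] := omega_coords_unbounded coords (s' %/ q.+1).+1 N qylt.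
have [w [dw qw _ nw]] := omega_coords_unbounded coords 0 y.+1 qwlt.
have B : pair_dom A (cpair x y).
  rewrite /pair_dom unpair_cpair /=; split => //; first by apply/omegastar_ltE => //; lia.
  by exists w; split => //; apply/omegastar_ltE => //; lia.
exists (cpair x y); split; last exact: leq_trans ny (cpair_geR _ _).
split; first by split => //; apply/(omegastar_blockE _ B); rewrite unpair_cpair /= qx; lia.
rewrite /omegastar_pair_slice /omegastar_slice unpair_cpair /= qx kx qy.
have -> : (q == n.+1) = false by apply/eqP; lia.
by have := divn_eq s' q.+1; move: nz; rewrite /s'; case: (q == n) => /=; lia.
Qed.

Lemma omegastar_slice_iso i s :
  iso_to (LStruct (in_slice i s) (fun a b => pair_lt A b a)) nat_lt.
Proof.
apply: iso_to_nat; [ | exact: omegastar_slice_finite_below | exact: omegastar_slice_unbounded].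
by apply/strict_total_rev/(strict_total_sub omegastar_pair_total) => a [[]].
Qed.

Lemma omegastar_slice_mono (i : 'I_n.+1) a b :
  pair_dom A a -> pair_dom A b -> minn (Q (X a)) n = i -> minn (Q (X b)) n = i ->
  omegastar_pair_slice i a < omegastar_pair_slice i b -> pair_lt A b a.
Proof.
move=> Ba Bb ia ib lt; apply/(omegastar_pair_ltE Bb Ba); move: lt.
have qa := omegastar_block_lt Ba; have ya := omegastar_pair_below Ba.
have qb := omegastar_block_lt Bb; have yb := omegastar_pair_below Bb.
rewrite /omegastar_pair_slice /omegastar_slice.
case: (eqVneq (Q (X a)) n.+1) => [qa1 | qa1];
  case: (eqVneq (Q (X b)) n.+1) => [qb1 | qb1] //; first lia.
move=> lt; have Eq : Q (X b) = Q (X a) by lia.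
rewrite Eq in lt; have lt_q j : Q (X a) - j < (Q (X a)).+1 by lia.
have lt' : K (X a) * (Q (X a)).+1 + (Q (X a) - Q (Y a)) <
           K (X b) * (Q (X a)).+1 + (Q (X a) - Q (Y b)) by lia.
by have := mulnD_small_lt (lt_q _) (lt_q _) lt'; lia.
Qed.

Lemma omegastar_block_iso (i : 'I_n.+1) :
  iso_to (LStruct (fun a => pair_dom A a /\ omegastar_block a = i) (fun a b => pair_lt A b a))
    omega2_lt.
Proof.
have total := strict_total_sub omegastar_pair_total
  (fun a (h : pair_dom A a /\ omegastar_block a = i) => h.1).
apply: (@iso_to_lex nat nat nat_lt nat_lt _ _ (omegastar_pair_slice i)).
- exact/strict_total_asym/strict_total_rev/total.
- by rewrite /nat_lt => a b; lia.
- by rewrite /nat_lt => a b; lia.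
- move=> a b [Ba /(omegastar_blockE _ Ba) ia] [Bb /(omegastar_blockE _ Bb) ib].
  exact: omegastar_slice_mono.
- exact: omegastar_slice_iso.
Qed.

Lemma omegastar_pair_order_iso :
  iso_to (pair_order A) (lex (@ord_lt n.+1) (fun p q => omega2_lt q p)).
Proof.
apply: (@iso_to_lex _ _ _ _ _ _ omegastar_block).
- exact: strict_total_asym omegastar_pair_total.
- by rewrite /ord_lt => a b; lia.
- by rewrite /ord_lt => a b ne; case: (ltngtP a b) => h; [left | right | case: ne; apply: val_inj].
- move=> a b Ba Bb; have qa := omegastar_block_lt Ba; have qb := omegastar_block_lt Bb.
  rewrite /ord_lt /omegastar_block !inordK; try lia.
  by move=> lt; apply/(omegastar_pair_ltE Ba Bb); lia.
- by move=> i; apply/iso_to_rev/omegastar_block_iso.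
Qed.
End OmegaStarCase.

(** * The embedding *)

Lemma lex_ord_asym m (T : Type) (R : T -> T -> Prop) :
  (forall s t, R s t -> ~ R t s) -> forall p q, lex (@ord_lt m) R p q -> ~ lex (@ord_lt m) R q p.
Proof.
move=> asym [i s] [j t]; rewrite /lex /ord_lt /=.
case=> [ij | [e st]] [ji | [e' st']]; [lia | by rewrite e' in ij; lia | by rewrite e in ji; lia |].
exact: asym st st'.
Qed.

Lemma lex_ord_least m (T : Type) (R : T -> T -> Prop) t0 :
  (forall t, t <> t0 -> R t0 t) -> forall p, p <> (ord0, t0) -> lex (@ord_lt m.+1) R (ord0, t0) p.
Proof.
move=> least [i t] ne; rewrite /lex /ord_lt /=; case: (posnP i) => [i0 | ip]; last by left.
right; have {}i0 : i = ord0 by apply: val_inj.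
by split => //; apply: least => t0t; apply: ne; rewrite i0 t0t.
Qed.

Lemma lex_no_least (I T : Type) (ltI : I -> I -> Prop) (R : T -> T -> Prop) :
  (forall t, exists t', R t' t) -> forall p, exists p', lex ltI R p' p.
Proof. by move=> no_least [i t]; have [t' lt] := no_least t; exists (i, t'); right. Qed.

Lemma nat_lt_asym a b : nat_lt a b -> ~ nat_lt b a.
Proof. by rewrite /nat_lt; lia. Qed.

Lemma omega2_lt_asym p q : omega2_lt p q -> ~ omega2_lt q p.
Proof. by case: p q => [a b] [c d]; rewrite /omega2_lt /lex /nat_lt /=; lia. Qed.

Lemma omega2_lt_least p : p <> (0, 0) -> omega2_lt (0, 0) p.
Proof.
case: p => [[|a] [|b]] ne; rewrite /omega2_lt /lex /nat_lt /=;
  [by case: ne | by right | by left | by left].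
Qed.

Lemma omega_times_not_star m A :
  iso_to A (@ot_lt (omega_times m.+1)) -> ~ iso_to A (@ot_lt (omegastar_times m.+1)).
Proof.
apply: iso_to_least_no_least; first exact/lex_ord_asym/nat_lt_asym.
  by exists (ord0, 0); apply: lex_ord_least => t; rewrite /nat_lt; lia.
apply: (@lex_no_least _ _ _ (fun a b : nat => nat_lt b a)) => t.
by exists t.+1; rewrite /nat_lt.
Qed.

Lemma omega2_times_not_star m A :
  iso_to A (@ot_lt (omega2_times m.+1)) -> ~ iso_to A (@ot_lt (omega2star_times m.+1)).
Proof.
apply: iso_to_least_no_least; first exact/lex_ord_asym/omega2_lt_asym.
  by exists (ord0, (0, 0)); apply/lex_ord_least/omega2_lt_least.
apply: (@lex_no_least _ _ _ (fun p q : nat * nat => omega2_lt q p)).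
by case=> a b; exists (a.+1, b); left; rewrite /nat_lt.
Qed.

Lemma iso_iff_of_types (L1 L2 M1 M2 : order_type) (A A' B B' : lstruct) :
  (forall X, iso_to X (@ot_lt L1) -> ~ iso_to X (@ot_lt L2)) ->
  (forall X, iso_to X (@ot_lt M1) -> ~ iso_to X (@ot_lt M2)) ->
  (iso_to A (@ot_lt L1) /\ iso_to B (@ot_lt M1) \/
   iso_to A (@ot_lt L2) /\ iso_to B (@ot_lt M2)) ->
  (iso_to A' (@ot_lt L1) /\ iso_to B' (@ot_lt M1) \/
   iso_to A' (@ot_lt L2) /\ iso_to B' (@ot_lt M2)) ->
  iso A A' <-> iso B B'.
Proof.
move=> L12 M12 [] [HA HB] [] [HA' HB']; split => I.
all: try exact: iso_of_iso_to HB HB'.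
all: try exact: iso_of_iso_to HA HA'.
- by case: (L12 _ HA (iso_iso_to I HA')).
- by case: (M12 _ HB (iso_iso_to I HB')).
- by case: (L12 _ (iso_iso_to I HA') HA).
- by case: (M12 _ (iso_iso_to I HB') HB).
Qed.

Lemma omega_class_total m A (KA : cls2 (omega_times m) (omegastar_times m) A) :
  strict_total (sdom A) (slt A).
Proof.
by case: KA => [/omega_times_coords | /omegastar_times_coords] [Q [K coords]];
  apply: omega_coords_total coords.
Qed.

Lemma pair_op_image_types n A B : cls2 (omega_times n.+2) (omegastar_times n.+2) A ->
  (forall phi, apply_op pair_op (diag A) phi <-> diag B phi) ->
  iso_to A (@ot_lt (omega_times n.+2)) /\ iso_to B (@ot_lt (omega2_times n.+1)) \/
  iso_to A (@ot_lt (omegastar_times n.+2)) /\ iso_to B (@ot_lt (omega2star_times n.+1)).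
Proof.
move=> KA HB; have EB phi : diag B phi <-> diag (pair_order A) phi.
  exact: iff_trans (iff_sym (HB phi)) (apply_pair_op (omega_class_total KA) phi).
case: KA => HA; [left | right]; split => //; apply: diag_iso_to EB _.
  by have [Q [K coords]] := omega_times_coords HA; apply: omega_pair_order_iso coords.
by have [Q [K coords]] := omegastar_times_coords HA; apply: omegastar_pair_order_iso coords.
Qed.

Theorem corollary3p3 (n : nat) : (1 <= n)%N ->
  comp_embeds (cls2 (omega_times n.+1) (omegastar_times n.+1))
              (cls2 (omega2_times n) (omega2star_times n)).
Proof.
case: n => [// | n] _; exists pair_op; split; first exact: is_enum_op_pair_op.
  move=> A KA; have GA := apply_pair_op (omega_class_total KA).
  exists (pair_order A); split => //.
  by case: (pair_op_image_types KA GA) => -[_ HB]; [left | right].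
move=> A A' B B' KA KA' HB HB'.
apply: iso_iff_of_types (pair_op_image_types KA HB) (pair_op_image_types KA' HB').
  exact: omega_times_not_star.
exact: omega2_times_not_star.
Qed.
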